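(* Let $\Sigma$ be an infinite alphabet and $k\ge1$. Every RCP function $f\colon(\Sigma^* )^k\to\Sigma^*$ is of the form $$f(x_1,\ldots,x_k)=w_0\,x_{i_1}^{p_1}\,w_1\,x_{i_2}^{p_2}\,w_2\cdots x_{i_n}^{p_n}\,w_n\quad\text{for all }x_1,\ldots,x_k\in\Sigma^*,$$ for some $n\in\mathbb{N}$, words $w_0,\ldots,w_n\in\Sigma^*$, exponents $p_1,\ldots,p_n\in\mathbb{N}$ and indices $i_1,\ldots,i_n\in\{1,\ldots,k\}$.
   Context: $\Sigma^*$ is the free monoid over $\Sigma$ (finite words, concatenation, empty word $\varepsilon$); $x^p$ denotes the concatenation of $p$ copies of $x$. A function $f\colon(\Sigma^* )^k\to\Sigma^*$ is RCP if for every monoid morphism $\varphi\colon\Sigma^*\to\Sigma^*$ and all $u_1,\ldots,u_k,v_1,\ldots,v_k$ with $\varphi(u_i)=\varphi(v_i)$ for all $i$, we have $\varphi(f(u_1,\ldots,u_k))=\varphi(f(v_1,\ldots,v_k))$. *)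

From mathcomp Require Import all_boot.
Set Implicit Arguments. Unset Strict Implicit. Unset Printing Implicit Defensive.

Definition infinite_alphabet (T : eqType) : Prop :=
  forall s : seq T, exists x : T, x \notin s.

Definition monoid_morphism (T : Type) (phi : seq T -> seq T) : Prop :=
  phi [::] = [::] /\ forall u v : seq T, phi (u ++ v) = phi u ++ phi v.

Definition wpow (T : Type) (x : seq T) (p : nat) : seq T := flatten (nseq p x).

Definition RCP (T : Type) (k : nat) (f : k.-tuple (seq T) -> seq T) : Prop :=
  forall (phi : seq T -> seq T) (u v : k.-tuple (seq T)),
    monoid_morphism phi ->
    (forall i : 'I_k, phi (tnth u i) = phi (tnth v i)) ->
    phi (f u) = phi (f v).

From Pilot Require Import Defs.
From mathcomp Require Import all_boot.

(* For a tuple d of distinct letters absent from x and f x, the substitution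
   sigma : d_i |-> x_i is a monoid morphism with sigma d_i = sigma x_i = x_i and
   sigma (f x) = f x, so RCP gives f x = sigma (f d). The letters of f d outside d
   all occur in f (eps, ..., eps); hence for one fixed tuple c of letters avoiding
   f (eps, ..., eps), comparing c and x through a common fresh d shows that f x is
   the image of the single word f c under c_i |-> x_i, a word of the required
   shape. *)

Set Implicit Arguments. Unset Strict Implicit.

Section LetterSubstitution.
Variable T : eqType.

(* Only the first occurrence of a letter in [c] counts; [c] is meant to be duplicate-free. *)
Definition subst_letters (c : seq T) (x : seq (seq T)) (w : seq T) : seq T :=
  flatten [seq if a \in c then nth [::] x (index a c) else [:: a] | a <- w].

Lemma subst_letters_cons c x a w :
  subst_letters c x (a :: w) =
  (if a \in c then nth [::] x (index a c) else [:: a]) ++ subst_letters c x w.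
Proof. by []. Qed.

Lemma subst_letters_cat c x u v :
  subst_letters c x (u ++ v) = subst_letters c x u ++ subst_letters c x v.
Proof. by rewrite /subst_letters map_cat flatten_cat. Qed.

Lemma subst_letters_morphism c x : Defs.monoid_morphism (subst_letters c x).
Proof. by split=> //; apply: subst_letters_cat. Qed.

Lemma subst_letters_id c x w : {in w, forall a, a \notin c} -> subst_letters c x w = w.
Proof.
elim: w => [//|a w IHw] wNc; rewrite subst_letters_cons IHw.
  by rewrite (negbTE (wNc a (mem_head _ _))).
by move=> b bw; apply: wNc; rewrite in_cons bw orbT.
Qed.

Lemma mem_subst_letters c x w a :
  a \in w -> a \notin c -> a \in subst_letters c x w.
Proof.
elim: w => [//|b w IHw]; rewrite in_cons subst_letters_cons mem_cat.
case/orP=> [/eqP <- aNc|aw aNc]; first by rewrite (negbTE aNc) mem_head.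
by rewrite IHw ?orbT.
Qed.

Lemma subst_letters_comp c d x w :
  uniq c -> size c = size d -> {in w, forall a, a \notin d -> a \notin c} ->
  subst_letters c x (subst_letters d [seq [:: a] | a <- c] w) = subst_letters d x w.
Proof.
move=> uniq_c size_cd; elim: w => [//|a w IHw] wNc.
rewrite !subst_letters_cons subst_letters_cat IHw; last first.
  by move=> b bw; apply: wNc; rewrite in_cons bw orbT.
congr (_ ++ _); case: ifP => ad.
  have idx_c : index a d < size c by rewrite size_cd index_mem.
  by rewrite (nth_map a) // subst_letters_cons mem_nth // index_uniq // cats0.
by rewrite subst_letters_cons cats0 (negbTE (wNc a (mem_head _ _) (negbT ad))).
Qed.

Lemma exists_fresh_tuple (s : seq T) n :
  infinite_alphabet T -> exists c : n.-tuple T, uniq c /\ {in c, forall a, a \notin s}.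
Proof.
move=> infT; elim: n => [|n [c [uniq_c cNs]]]; first by exists [tuple].
have [a] := infT (c ++ s); rewrite mem_cat negb_or => /andP [aNc aNs].
exists [tuple of a :: c]; split; first by rewrite /= aNc uniq_c.
by move=> b; rewrite in_cons => /orP [/eqP ->|/cNs].
Qed.

(* Every letter of [w] either stays or becomes some x_i; consecutive constant
   letters are collected into the trailing words of the triples. *)
Lemma subst_letters_shape k (c : k.-tuple T) (w : seq T) :
  exists (w0 : seq T) (l : seq ('I_k * nat * seq T)),
    forall x : k.-tuple (seq T),
      subst_letters c x w = w0 ++ flatten [seq wpow (tnth x t.1.1) t.1.2 ++ t.2 | t <- l].
Proof.
elim: w => [|a w [w0 [l IHw]]]; first by exists [::], [::].
case ac: (a \in c); last by exists (a :: w0), l => x; rewrite subst_letters_cons ac IHw.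
have idx_c : index a c < k by rewrite -[k in _ < k](size_tuple c) index_mem.
exists [::], ((Ordinal idx_c, 1, w0) :: l) => x.
by rewrite subst_letters_cons ac IHw /= /wpow /= cats0 (tnth_nth [::]) catA.
Qed.

End LetterSubstitution.

Section RCPFunctions.
Variables (T : eqType) (k : nat) (f : k.-tuple (seq T) -> seq T).
Hypothesis RCPf : RCP f.

Definition letter_tuple (d : k.-tuple T) : k.-tuple (seq T) :=
  map_tuple (fun a => [:: a]) d.

Lemma RCP_subst_fresh (d : k.-tuple T) (x : k.-tuple (seq T)) :
  uniq d -> {in d, forall a, a \notin flatten x ++ f x} ->
  f x = subst_letters d x (f (letter_tuple d)).
Proof.
move=> uniq_d dNx.
have fixes w : {subset w <= flatten x ++ f x} -> subst_letters d x w = w.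
  move=> wx; apply: subst_letters_id => a aw; apply/negP => ad.
  by have := dNx a ad; rewrite wx.
rewrite -{1}(fixes (f x)); last by move=> a af; rewrite mem_cat af orbT.
apply: esym; apply: RCPf => [|i]; first exact: subst_letters_morphism.
rewrite tnth_map (fixes (tnth x i)); last first.
  by move=> a ax; rewrite mem_cat; apply/orP; left; apply/flattenP; exists (tnth x i) => //; apply: mem_tnth.
rewrite subst_letters_cons mem_tnth cats0 (tnth_nth (tnth d i)) index_uniq ?size_tuple //.
by rewrite (tnth_nth [::]).
Qed.

Definition empty_tuple : k.-tuple (seq T) := nseq_tuple k [::].

Lemma RCP_subst_template (c : k.-tuple T) :
  infinite_alphabet T -> uniq c -> {in c, forall a, a \notin f empty_tuple} ->
  forall x : k.-tuple (seq T), f x = subst_letters c x (f (letter_tuple c)).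
Proof.
move=> infT uniq_c cNfe x; set fc := f (letter_tuple c).
have [d [uniq_d dN]] :=
  exists_fresh_tuple (flatten x ++ f x ++ c ++ fc ++ f empty_tuple) k infT.
set w := f (letter_tuple d).
have fx : f x = subst_letters d x w.
  apply: RCP_subst_fresh => // a /dN; rewrite !mem_cat !negb_or.
  by case/and5P => -> -> _ _ _.
have fc_w : fc = subst_letters d (letter_tuple c) w.
  apply: RCP_subst_fresh => // a /dN; rewrite !mem_cat !negb_or /= flatten_seq1.
  by case/and5P => _ _ -> -> _.
(* a letter of w outside d survives in f empty_tuple, which avoids c *)
have fe : f empty_tuple = subst_letters d empty_tuple w.
  apply: RCP_subst_fresh => // a /dN; rewrite !mem_cat !negb_or.
  case/and5P => _ _ _ _ ->; rewrite andbT /=.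
  by elim: (k).
rewrite fc_w fx subst_letters_comp ?size_tuple // => a aw aNd.
by apply/negP => /cNfe; rewrite fe mem_subst_letters.
Qed.

End RCPFunctions.

Theorem mainTheorem20 (T : eqType) (k : nat) (f : k.-tuple (seq T) -> seq T) :
  infinite_alphabet T -> 0 < k -> RCP f ->
  exists (w0 : seq T) (l : seq ('I_k * nat * seq T)),
    forall x : k.-tuple (seq T),
      f x = w0 ++ flatten [seq wpow (tnth x t.1.1) t.1.2 ++ t.2 | t <- l].
Proof.
(* The argument does not need 0 < k. *)
move=> infT _ RCPf.
have [c [uniq_c cNfe]] := exists_fresh_tuple (f (empty_tuple T k)) k infT.
have [w0 [l shape]] := subst_letters_shape c (f (letter_tuple c)).
by exists w0, l => x; rewrite -shape (RCP_subst_template RCPf infT uniq_c cNfe).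
Qed.
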